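(* Let $s$ be a scoring vector with all entries positive, and assume $m=dn$ with $d$ a positive integer. There exist a preference profile $P$ and a vector $k$ (namely $k_1=\cdots=k_n=d$) such that $$\frac{(n-1)\sum_{j=1}^{d}s_j+\sum_{j=d+1}^{2d}s_j}{\sum_{j=1}^m s_j}\le\mathcal{P}^u_{AtoP}\le\frac{n\sum_{j=1}^{d}s_j}{\sum_{j=1}^m s_j},$$ $$\frac{\sum_{j=d+1}^{2d}s_j}{\sum_{j=(n-1)d+1}^m s_j}\le\mathcal{P}^e_{AtoP}\le\frac{\sum_{j=1}^{d}s_j}{\sum_{j=(n-1)d+1}^m s_j},$$ $$\frac{\big(\sum_{j=1}^{d}s_j\big)^{n-1}\big(\sum_{j=d+1}^{2d}s_j\big)}{\prod_{i=1}^n\sum_{j=(i-1)d+1}^{id}s_j}\le\mathcal{P}^n_{AtoP}\le\frac{\big(\sum_{j=1}^{d}s_j\big)^{n}}{\prod_{i=1}^n\sum_{j=(i-1)d+1}^{id}s_j}.$$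
   Context: There are $n$ agents $a_1,\ldots,a_n$ and $m$ items. A preference profile $P=(\succ_{a_1},\ldots,\succ_{a_n})$ assigns to each agent a strict ranking of the items. A scoring vector $s=(s_1,\ldots,s_m)$ satisfies $s_1\ge\cdots\ge s_m$; an agent's value for her $j$-th preferred item is $s_j$, utilities are additive. Given $k=(k_1,\ldots,k_n)$ with non-negative integer entries summing to $m$, agent $a_1$ first picks $k_1$ items, then $a_2$ picks $k_2$ of the remaining ones, etc., each greedily picking her most preferred remaining items; $U^k_P(a)$ is the total score $a$ receives. $SW^u_P(k)=\sum_a U^k_P(a)$, $SW^e_P(k)=\min_a U^k_P(a)$, $SW^n_P(k)=\prod_a U^k_P(a)$. For a permutation $\pi$ of $[n]$, $P_\pi$ is the profile obtained from $P$ by permuting the agents' rankings according to $\pi$. The price of assignment of agents to positions is $\mathcal{P}^x_{AtoP}=\max_{\pi}SW^x_{P_\pi}(k)/\min_{\pi}SW^x_{P_\pi}(k)$ for $x\in\{u,e,n\}$, with $\pi$ ranging over all permutations of $[n]$. *)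

From mathcomp Require Import all_boot all_order all_algebra.
From mathcomp Require Import fingroup perm.
Set Implicit Arguments. Unset Strict Implicit. Unset Printing Implicit Defensive.
Import Order.TTheory GRing.Theory Num.Theory.
Local Open Scope ring_scope.

(* Agents are 'I_n (agent a_{i+1} is ordinal i), items are 'I_m.
   A profile assigns to each agent a strict ranking of the items, given as a
   permutation: (P a) j is the (j+1)-th preferred item of agent a. *)
Definition profile (n m : nat) := 'I_n -> {perm 'I_m}.

Definition ranking n m (P : profile n m) (a : 'I_n) : seq 'I_m :=
  [seq P a j | j <- enum 'I_m].

(* Items still available before agent number i (0-based) picks, and the
   bundle picked by agent number i: greedily her k_i most preferred
   remaining items. *)
Fixpoint avail n m (P : profile n m) (k : 'I_n -> nat) (i : nat) : {set 'I_m} :=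
  match i with
  | 0 => [set: 'I_m]
  | i'.+1 =>
      let A := avail P k i' in
      match insub i' : option 'I_n with
      | Some a => A :\: [set x in take (k a) [seq x <- ranking P a | x \in A]]
      | None => A
      end
  end.

Definition bundle n m (P : profile n m) (k : 'I_n -> nat) (a : 'I_n) : seq 'I_m :=
  take (k a) [seq x <- ranking P a | x \in avail P k a].

(* Scoring vector s is 1-indexed: s j = s_j. Item x has value s_{r+1} for
   agent a if x is at 0-based position r in a's ranking. *)
Definition utility (R : numDomainType) n m (s : nat -> R) (P : profile n m)
  (k : 'I_n -> nat) (a : 'I_n) : R :=
  \sum_(x <- bundle P k a) s (((P a)^-1)%g x).+1.

(* Minimum of a list (0 for the empty list; never used on empty lists here). *)
Definition seqmin (R : realDomainType) (l : seq R) : R :=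
  \big[Num.min/head 0 l]_(x <- l) x.
Definition seqmax (R : realDomainType) (l : seq R) : R :=
  \big[Num.max/head 0 l]_(x <- l) x.

Definition SWu (R : realDomainType) n m s (P : profile n m) k : R :=
  \sum_(a : 'I_n) utility s P k a.
Definition SWe (R : realDomainType) n m s (P : profile n m) k : R :=
  seqmin [seq utility s P k a | a <- enum 'I_n].
Definition SWn (R : realDomainType) n m s (P : profile n m) k : R :=
  \prod_(a : 'I_n) utility s P k a.

Definition permute_profile n m (P : profile n m) (pi : {perm 'I_n}) : profile n m :=
  fun a => P (pi a).

Definition price_AtoP (R : realFieldType) n m
  (SW : profile n m -> ('I_n -> nat) -> R) (P : profile n m) (k : 'I_n -> nat) : R :=
  seqmax [seq SW (permute_profile P pi) k | pi <- enum {perm 'I_n}] /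
  seqmin [seq SW (permute_profile P pi) k | pi <- enum {perm 'I_n}].

From mathcomp Require Import all_boot all_order all_algebra.
From mathcomp Require Import fingroup perm zify.
Set Implicit Arguments. Unset Strict Implicit. Unset Printing Implicit Defensive.
Import Order.TTheory GRing.Theory Num.Theory.
Local Open Scope ring_scope.

(* Group the ranks 1..m into n blocks of d consecutive ranks and let blk a be
   the sum of the scores of block a.  For ANY profile, the agent in position a
   picks d items among the m - a*d still available, so her utility lies between
   blk a (her a*d best items all gone) and blk 0 (she gets her d favourites):
   this gives the upper bounds, for every welfare notion, by comparing the
   largest possible welfare with the smallest possible one.

   For the lower bounds we build an extremal profile ranking the items block by
   block: agent 0 ranks the blocks 0, n-1, 1, ..., n-2 and agent a >= 1 ranks
   a-1, 0, ..., a-2, a, ..., n-1.  In the original order every agent a receives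
   exactly blk a, and once the first two agents are exchanged every agent gets
   blk 0 except the one in position 1, who gets blk 1.  Both runs are computed
   by one general lemma describing greedy picking when agents rank whole blocks. *)

Lemma seqmin_ge (R : realDomainType) (l : seq R) c :
  l != [::] -> (forall x, x \in l -> c <= x) -> c <= seqmin l.
Proof.
case: l => [//|y l] _ H; rewrite /seqmin /=.
have : c <= y by apply: H; rewrite inE eqxx.
elim: (y :: l) H => [|z r IH] Hr cy; first by rewrite big_nil.
rewrite big_cons le_min Hr ?inE ?eqxx // IH // => x hx.
by apply: Hr; rewrite inE hx orbT.
Qed.

Lemma seqmin_le (R : realDomainType) (l : seq R) x : x \in l -> seqmin l <= x.
Proof.
rewrite /seqmin; elim: l (head 0 l) => [//|z r IH] i0.
by rewrite inE big_cons ge_min => /orP[/eqP->|/IH->]; rewrite ?lexx ?orbT.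
Qed.

Lemma seqmax_le (R : realDomainType) (l : seq R) c :
  l != [::] -> (forall x, x \in l -> x <= c) -> seqmax l <= c.
Proof.
case: l => [//|y l] _ H; rewrite /seqmax /=.
have : y <= c by apply: H; rewrite inE eqxx.
elim: (y :: l) H => [|z r IH] Hr yc; first by rewrite big_nil.
rewrite big_cons ge_max Hr ?inE ?eqxx // IH // => x hx.
by apply: Hr; rewrite inE hx orbT.
Qed.

Lemma seqmax_ge (R : realDomainType) (l : seq R) x : x \in l -> x <= seqmax l.
Proof.
rewrite /seqmax; elim: l (head 0 l) => [//|z r IH] i0.
by rewrite inE big_cons le_max => /orP[/eqP->|/IH->]; rewrite ?lexx ?orbT.
Qed.

Lemma ratio_bounds (R : realFieldType) (I : finType) (f : I -> R)
    (lo hi vmax vmin : R) (p1 p2 : I) :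
  0 < lo -> (forall i, lo <= f i <= hi) -> vmax <= f p2 -> f p1 <= vmin ->
  0 <= vmax ->
  vmax / vmin <= seqmax [seq f i | i <- enum I] / seqmin [seq f i | i <- enum I]
              <= hi / lo.
Proof.
move=> lo_gt0 f_range vmax_le le_vmin vmax_ge0.
set l := [seq f i | i <- enum I].
have inl i : f i \in l by rewrite map_f ?mem_enum.
have l_ne : l != [::] by apply/eqP => l0; have := inl p1; rewrite l0.
have max_ge : f p2 <= seqmax l by apply: seqmax_ge.
have max_le : seqmax l <= hi.
  by apply: seqmax_le => // x /mapP [i _ ->]; case/andP: (f_range i).
have min_le : seqmin l <= f p1 by apply: seqmin_le.
have min_ge : lo <= seqmin l.
  by apply: seqmin_ge => // x /mapP [i _ ->]; case/andP: (f_range i).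
have min_gt0 : 0 < seqmin l by apply: lt_le_trans min_ge.
have max_ge0 : 0 <= seqmax l by apply: le_trans max_ge; apply: le_trans vmax_le.
have vmin_gt0 : 0 < vmin by apply: lt_le_trans le_vmin; apply: lt_le_trans min_le.
apply/andP; split; apply: ler_pM; rewrite ?invr_ge0 ?lef_pV2 ?posrE //.
- exact: ltW.
- exact: le_trans max_ge.
- exact: le_trans le_vmin.
- exact: ltW.
Qed.

Definition blk (R : numDomainType) (s : nat -> R) (d a : nat) : R :=
  \sum_(i < d) s (a * d + i).+1.

Lemma sum_blk (R : numDomainType) (s : nat -> R) d a :
  \sum_((a * d).+1 <= j < (a * d + d).+1) s j = blk s d a.
Proof.
rewrite -{1}(add0n (a * d).+1) big_addn.
have -> : ((a * d + d).+1 - (a * d).+1 = d)%N by lia.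
by rewrite big_mkord; apply: eq_bigr => i _; congr s; lia.
Qed.

Lemma sum_blocks (R : numDomainType) (s : nat -> R) d N :
  \sum_(1 <= j < (N * d).+1) s j = \sum_(a < N) blk s d a.
Proof.
elim: N => [|N IH]; first by rewrite big_ord0 mul0n big_geq.
rewrite big_ord_recr /= -IH (big_cat_nat _ (n := (N * d).+1)) //=; last first.
  by rewrite ltnS mulSn; lia.
by rewrite mulSn addnC sum_blk.
Qed.

Lemma prod_blocks (R : numDomainType) (s : nat -> R) d n :
  \prod_(1 <= i < n.+1) \sum_(((i - 1) * d).+1 <= j < (i * d).+1) s j
  = \prod_(a < n) blk s d a.
Proof.
rewrite big_add1 /= big_mkord; apply: eq_bigr => a _.
by rewrite subn1 /= mulSn addnC sum_blk.
Qed.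

Section Blocks.
Variables (R : numDomainType) (s : nat -> R) (n d : nat).
Hypothesis hpos : forall j, (1 <= j <= d * n)%N -> 0 < s j.
Hypothesis hmono : forall i j, (1 <= i <= j)%N -> (j <= d * n)%N -> s j <= s i.

Lemma blk_gt0 a : (0 < d)%N -> (a < n)%N -> 0 < blk s d a.
Proof.
move=> hd ha; rewrite /blk -(prednK hd) big_ord_recl ltr_pwDl ?hpos //.
  by apply/andP; split; rewrite //= addn0 prednK //; nia.
apply: sumr_ge0 => i _; apply/ltW/hpos.
by rewrite lift0 /=; move: (nat_of_ord i) (ltn_ord i) => j; rewrite prednK //; nia.
Qed.

Lemma blk_antitone a b : (a <= b)%N -> (b < n)%N -> blk s d b <= blk s d a.
Proof.
move=> hab hb; apply: ler_sum => i _; have hi := ltn_ord i.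
by apply: hmono; nia.
Qed.

End Blocks.

Lemma sorted_nth_gap (V : seq nat) i k : sorted ltn V ->
  (i + k < size V)%N -> (nth 0 V i + k <= nth 0 V (i + k))%N.
Proof.
move=> sV; elim: k => [|k IH] h; first by rewrite !addn0.
have := IH ltac:(lia).
have : (nth 0 V (i + k) < nth 0 V (i + k.+1))%N.
  by apply: (sorted_ltn_nth ltn_trans) => //; rewrite ?inE; lia.
lia.
Qed.

Lemma sorted_nth_bounds (V : seq nat) m i : sorted ltn V ->
  (forall x, x \in V -> x < m)%N -> (i < size V)%N ->
  (i <= nth 0 V i <= i + (m - size V))%N.
Proof.
move=> sV V_lt hi.
have := @sorted_nth_gap V 0 i sV; rewrite add0n => /(_ hi) lo.
have := @sorted_nth_gap V i (size V - i).-1 sV.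
have -> : (i + (size V - i).-1 = (size V).-1)%N by lia.
move=> /(_ ltac:(lia)) up.
have : (nth 0 V (size V).-1 < m)%N.
  by apply: V_lt; apply: mem_nth; rewrite prednK ?leqnn //; apply: leq_ltn_trans hi.
lia.
Qed.

Section GreedyRanks.
Variables (n m : nat) (Q : profile n m) (d : nat).
Local Notation k := (fun _ : 'I_n => d).

Definition avail_ranks (a : 'I_n) : seq 'I_m :=
  [seq j <- enum 'I_m | Q a j \in avail Q k a].

Lemma bundle_ranks a : bundle Q k a = map (Q a) (take d (avail_ranks a)).
Proof. by rewrite /bundle /ranking filter_map -map_take. Qed.

Lemma utility_ranks (R : numDomainType) (s : nat -> R) a :
  utility s Q k a = \sum_(j <- take d (map val (avail_ranks a))) s j.+1.
Proof.
rewrite /utility bundle_ranks big_map -map_take big_map.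
by apply: eq_bigr => j _; rewrite permK.
Qed.

Lemma avail_ranks_sorted a : sorted ltn (map val (avail_ranks a)).
Proof.
rewrite sorted_map; apply: sorted_filter; first by move=> x y z; apply: ltn_trans.
by rewrite -sorted_map val_enum_ord iota_ltn_sorted.
Qed.

Lemma size_avail_ranks a : size (avail_ranks a) = #|avail Q k a|.
Proof.
rewrite /avail_ranks /enum_mem filter_predT -cardE.
rewrite -(card_preimset (avail Q k a) (@perm_inj _ (Q a))).
by apply: eq_card => j; rewrite inE.
Qed.

Lemma avail_succ (a : 'I_n) :
  avail Q k (val a).+1 = avail Q k a :\: [set x in bundle Q k a].
Proof.
rewrite /=; case: insubP => [b _ hb|]; last by rewrite ltn_ord.
by have -> : b = a by apply: val_inj.
Qed.

Lemma card_avail i : m = (d * n)%N -> (i <= n)%N -> #|avail Q k i| = (m - i * d)%N.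
Proof.
move=> hm; elim: i => [|i IH] hi; first by rewrite /= cardsT card_ord mul0n subn0.
have hin : (i < n)%N by [].
rewrite (avail_succ (Ordinal hin)) cardsD /=.
have bundle_sub : [set x in bundle Q k (Ordinal hin)] \subset avail Q k i.
  apply/subsetP => x; rewrite inE bundle_ranks => /mapP [j].
  by move/mem_take; rewrite mem_filter => /andP [h _] ->.
have bundle_uniq : uniq (bundle Q k (Ordinal hin)).
  rewrite bundle_ranks map_inj_uniq; last exact: perm_inj.
  by apply/take_uniq/filter_uniq/enum_uniq.
rewrite (setIidPr bundle_sub) cardsE (card_uniqP bundle_uniq) bundle_ranks.
have := IH (ltnW hin); rewrite size_map size_takel => [->|]; first by rewrite mulSn; lia.
by rewrite size_avail_ranks /= (IH (ltnW hin)) hm; nia.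
Qed.

Lemma utility_bounds (R : numDomainType) (s : nat -> R) (a : 'I_n) :
  m = (d * n)%N ->
  (forall i j, (1 <= i <= j)%N -> (j <= m)%N -> s j <= s i) ->
  blk s d a <= utility s Q k a <= blk s d 0.
Proof.
move=> hm hmono; rewrite utility_ranks.
set V := map val (avail_ranks a).
have sizeV : size V = (m - a * d)%N.
  by rewrite size_map size_avail_ranks card_avail // ltnW.
have dV : (d <= size V)%N by rewrite sizeV hm; have := ltn_ord a; nia.
have blocks_le : (a * d + d <= m)%N by rewrite hm; have := ltn_ord a; nia.
have V_lt x : x \in V -> (x < m)%N by rewrite /V => /mapP [j _ ->]; exact: ltn_ord.
have sV : sorted ltn V by apply: avail_ranks_sorted.
clearbody V; rewrite (big_nth 0%N) size_takel // big_mkord.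
apply/andP; split; apply: ler_sum => i _; rewrite nth_take //;
  have hi := ltn_ord i; have iV := leq_trans hi dV;
  have /andP [lo up] := sorted_nth_bounds sV V_lt iV;
  have := V_lt _ (mem_nth 0%N iV); rewrite sizeV in up;
  move=> nth_lt; apply: hmono; lia.
Qed.

End GreedyRanks.

Lemma block_lt d n (x : 'I_(d * n)) : (x %/ d < n)%N.
Proof.
have hx := ltn_ord x; have hd : (0 < d)%N by case: d x hx.
by rewrite ltn_divLR //; lia.
Qed.

Lemma in_block d j t : (0 < d)%N -> (j %/ d == t)%N = (t * d <= j < t * d + d)%N.
Proof.
move=> hd; rewrite eqn_leq -ltnS ltn_divLR // leq_divRL // andbC.
by rewrite mulSn addnC.
Qed.

Section GreedyBlocks.
Variables (R : numDomainType) (s : nat -> R) (n d : nat) (Q : profile n (d * n)).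
Hypothesis hd : (0 < d)%N.
Local Notation k := (fun _ : 'I_n => d).

Lemma greedy_block_step (a : 'I_n) (sg : nat -> nat) (T : pred nat) (t : nat) :
  injective sg ->
  (forall j : 'I_(d * n), Q a j %/ d = sg (j %/ d))%N ->
  (forall x : 'I_(d * n), (x \in avail Q k a) = T (x %/ d)%N) ->
  (forall b, (b < t)%N -> ~~ T (sg b)) -> T (sg t) -> (t < n)%N ->
  utility s Q k a = blk s d t /\
  forall x : 'I_(d * n),
    (x \in avail Q k (val a).+1) = T (x %/ d)%N && (x %/ d != sg t)%N.
Proof.
move=> sg_inj Q_blocks avail_T skip hit t_lt.
have ranks_T : map val (avail_ranks Q d a) = [seq j <- iota 0 (d * n)%N | T (sg (j %/ d)%N)].
  rewrite /avail_ranks -val_enum_ord filter_map; congr map; apply: eq_filter => j.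
  by rewrite /= avail_T Q_blocks.
have first_ranks : take d (map val (avail_ranks Q d a)) = iota (t * d) d.
  rewrite ranks_T (_ : d * n = t * d + (d + (d * n - t.+1 * d)))%N; last by nia.
  rewrite !iotaD filter_cat add0n.
  have -> : [seq j <- iota 0 (t * d) | T (sg (j %/ d)%N)] = [::].
    apply/eqP; rewrite -size_eq0 size_filter -leqn0 leqNgt -has_count.
    apply/hasPn => j; rewrite mem_iota add0n => /andP [_ hj] /=.
    by apply: skip; rewrite ltn_divLR.
  rewrite cat0s filter_cat (all_filterP _) ?take_size_cat ?size_iota //.
  apply/allP => j; rewrite mem_iota => hj.
  by have /eqP -> : (j %/ d == t)%N by rewrite in_block.
split.
  rewrite utility_ranks first_ranks -{1}(addn0 (t * d)%N) iotaDl big_map.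
  by rewrite [iota 0 d](_ : _ = index_iota 0 d) ?big_mkord // /index_iota subn0.
move=> x; rewrite avail_succ in_setD inE avail_T.
set y := ((Q a)^-1)%g x.
have x_block : (x %/ d)%N = sg (y %/ d)%N by rewrite -Q_blocks permKV.
rewrite bundle_ranks -{1}(permKV (Q a) x) mem_map; last exact: perm_inj.
have -> : (y \in take d (avail_ranks Q d a)) = (val y \in iota (t * d) d).
  by rewrite -first_ranks -map_take mem_map //; exact: val_inj.
by rewrite mem_iota x_block (inj_eq sg_inj) in_block // andbC.
Qed.

Lemma greedy_blocks (sg : nat -> nat -> nat) (T : nat -> pred nat) (t : nat -> nat) :
  (forall p, injective (sg p)) ->
  (forall (a : 'I_n) (j : 'I_(d * n)), Q a j %/ d = sg a (j %/ d))%N ->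
  (forall b, (b < n)%N -> T 0%N b) ->
  (forall p b, (p < n)%N -> (b < t p)%N -> ~~ T p (sg p b)) ->
  (forall p, (p < n)%N -> T p (sg p (t p))) ->
  (forall p, (p < n)%N -> (t p < n)%N) ->
  (forall p b, (p < n)%N -> (b < n)%N -> T p b && (b != sg p (t p)) = T p.+1 b) ->
  forall a : 'I_n, utility s Q k a = blk s d (t a).
Proof.
move=> sg_inj Q_blocks T0 skip hit t_lt T_next.
have avail_T p : (p <= n)%N ->
    forall x : 'I_(d * n), (x \in avail Q k p) = T p (x %/ d)%N.
  elim: p => [|p IH] hp x; first by rewrite /= in_setT T0 ?block_lt.
  have [_ ->] := greedy_block_step (a := Ordinal hp) (sg_inj p) (Q_blocks _)
    (IH (ltnW hp)) (skip p^~ hp) (hit p hp) (t_lt p hp).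
  by rewrite T_next ?block_lt.
move=> a; have ha := ltn_ord a.
by have [-> _] := greedy_block_step (sg_inj a) (Q_blocks a) (avail_T a (ltnW ha))
  (skip a^~ ha) (hit a ha) (t_lt a ha).
Qed.

End GreedyBlocks.

Definition rot (lo c b : nat) : nat :=
  if (lo <= b < c)%N then (if b == lo then c.-1 else b.-1) else b.

Lemma rot_inj lo c : injective (rot lo c).
Proof.
move=> x y; rewrite /rot.
case: (boolP (lo <= x < c)%N) => hx; case: (boolP (lo <= y < c)%N) => hy;
case: (boolP (x == lo)) => ex; case: (boolP (y == lo)) => ey; lia.
Qed.

(* The block preferences of the extremal profile: block_pref n a b is the block
   that agent a ranks (b+1)-th.  Agent 0 ranks 0, n-1, 1, ..., n-2, and agent
   a >= 1 ranks a-1, 0, 1, ..., a-2, a, a+1, ..., n-1. *)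
Definition block_pref (n a : nat) : nat -> nat :=
  if a == 0%N then rot 1 n else rot 0 a.

Lemma block_pref_inj n a : injective (block_pref n a).
Proof. by rewrite /block_pref; case: ifP => _; apply: rot_inj. Qed.

Lemma block_pref_lt n a b : (a < n)%N -> (b < n)%N -> (block_pref n a b < n)%N.
Proof. by rewrite /block_pref /rot => ha hb; do ?case: ifP => ?; lia. Qed.

Lemma block_pref_diag n a : block_pref n a a = a.
Proof. by rewrite /block_pref /rot; do ?case: ifP => ?; lia. Qed.

Lemma block_pref_below n a b : (b < a)%N -> (block_pref n a b < a)%N.
Proof. by rewrite /block_pref /rot => h; do ?case: ifP => ?; lia. Qed.

(* The order in which the first two agents of the extremal profile are exchanged:
   the agent in position p has the preferences of agent swap01 p, the available
   blocks before her turn are those satisfying swapped_avail n p, and she takes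
   her (swapped_block p + 1)-th block: her first one, except in position 1 where
   block 0 is gone and she takes her second one, block n-1. *)
Definition swap01 (p : nat) : nat :=
  if p == 0%N then 1%N else if p == 1%N then 0%N else p.
Definition swapped_avail (n p b : nat) : bool :=
  if p == 0%N then true else if p == 1%N then (1 <= b)%N else (p.-1 <= b < n.-1)%N.
Definition swapped_block (p : nat) : nat := if p == 1%N then 1%N else 0%N.

Section Construction.
Variables (n d : nat).
Hypothesis hd : (0 < d)%N.

Definition lift_blocks (sg : nat -> nat) (j : 'I_(d * n)) : 'I_(d * n) :=
  insubd j (sg (j %/ d) * d + j %% d)%N.

Lemma lift_blocks_val sg (sg_lt : forall b, (b < n)%N -> (sg b < n)%N) j :
  val (lift_blocks sg j) = (sg (j %/ d) * d + j %% d)%N.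
Proof.
rewrite /lift_blocks val_insubd; case: ifP => // /negP []; rewrite -/(is_true _).
have := sg_lt _ (block_lt j); have := ltn_pmod j hd; nia.
Qed.

Lemma lift_blocks_div sg (sg_lt : forall b, (b < n)%N -> (sg b < n)%N) j :
  (val (lift_blocks sg j) %/ d = sg (j %/ d))%N.
Proof.
by rewrite lift_blocks_val // divnMDl // (divn_small (ltn_pmod _ hd)) addn0.
Qed.

Lemma lift_blocks_inj sg : injective sg -> (forall b, (b < n)%N -> (sg b < n)%N) ->
  injective (lift_blocks sg).
Proof.
move=> sg_inj sg_lt j1 j2 e.
have e_div : (j1 %/ d = j2 %/ d)%N by apply: sg_inj; rewrite -!lift_blocks_div // e.
have e_mod : (j1 %% d = j2 %% d)%N.
  have := congr1 (fun x : 'I_(d * n) => (val x %% d)%N) e.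
  by rewrite /= !lift_blocks_val // !modnMDl !modn_mod.
by apply: val_inj; rewrite /= (divn_eq j1 d) (divn_eq j2 d) e_div e_mod.
Qed.

Definition extremal_profile : profile n (d * n) := fun a =>
  perm (lift_blocks_inj (@block_pref_inj n a) (fun b => @block_pref_lt n a b (ltn_ord a))).

Lemma extremal_profile_blocks (pi : {perm 'I_n}) a j :
  (permute_profile extremal_profile pi a j %/ d = block_pref n (pi a) (j %/ d))%N.
Proof. by rewrite /permute_profile permE lift_blocks_div // => b; apply: block_pref_lt. Qed.

(* In the original order, agent a's a preferred blocks are all gone when she
   picks, so she gets block a: the worst possible outcome in every position. *)
Lemma utility_extremal_id (R : numDomainType) (s : nat -> R) (a : 'I_n) :
  utility s (permute_profile extremal_profile 1) (fun _ => d) a = blk s d a.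
Proof.
apply: (@greedy_blocks R s n d _ hd (block_pref n) (fun p b => p <= b)%N id) => //.
- by move=> p; apply: block_pref_inj.
- by move=> b j; rewrite extremal_profile_blocks perm1.
- by move=> p b _ /(block_pref_below n); rewrite -ltnNge.
- by move=> p _; rewrite block_pref_diag.
- by move=> p b _ _; rewrite block_pref_diag; lia.
Qed.

Hypothesis hn : (2 <= n)%N.

Definition swap_first_two : {perm 'I_n} := tperm (Ordinal (ltnW hn)) (Ordinal hn).

Lemma swap_first_two_val a : val (swap_first_two a) = swap01 a.
Proof.
rewrite /swap01; case: tpermP => [->|->|na0 na1] //=.
have /negPf -> : val a != 0%N by apply/eqP => e; apply/na0/val_inj.
by have /negPf -> : val a != 1%N by apply/eqP => e; apply/na1/val_inj.
Qed.

Lemma utility_extremal_swapped (R : numDomainType) (s : nat -> R) (a : 'I_n) :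
  utility s (permute_profile extremal_profile swap_first_two) (fun _ => d) a
  = blk s d (swapped_block a).
Proof.
apply: (@greedy_blocks R s n d _ hd (fun p => block_pref n (swap01 p))
  (swapped_avail n) swapped_block) => //.
- by move=> p; apply: block_pref_inj.
- by move=> b j; rewrite extremal_profile_blocks swap_first_two_val.
all: by move=> p; case: p => [|[|p]] hp; rewrite /swapped_avail /block_pref /rot
  /swap01 /swapped_block /=; try move=> b; do ?case: ifP => ?; lia.
Qed.

End Construction.

Lemma sum_swapped (R : numDomainType) (s : nat -> R) n d : (1 < n)%N ->
  \sum_(a : 'I_n) blk s d (swapped_block a) = (n - 1)%:R * blk s d 0 + blk s d 1.
Proof.
move=> hn; rewrite (bigD1 (Ordinal hn)) //= addrC; congr (_ + _).
rewrite (eq_bigr (fun _ => blk s d 0)) => [|a ha]; last first.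
  by rewrite /swapped_block ifN //; apply: contra ha => /eqP e; apply/eqP/val_inj.
by rewrite sumr_const cardC1 card_ord mulr_natl subn1.
Qed.

Lemma prod_swapped (R : numDomainType) (s : nat -> R) n d : (1 < n)%N ->
  \prod_(a : 'I_n) blk s d (swapped_block a) = blk s d 0 ^+ (n - 1) * blk s d 1.
Proof.
move=> hn; rewrite (bigD1 (Ordinal hn)) //= mulrC; congr (_ * _).
rewrite (eq_bigr (fun _ => blk s d 0)) => [|a ha]; last first.
  by rewrite /swapped_block ifN //; apply: contra ha => /eqP e; apply/eqP/val_inj.
by rewrite prodr_const cardC1 card_ord subn1.
Qed.

Section Prices.
Variables (R : realFieldType) (s : nat -> R) (n d : nat) (Q : profile n (d * n)).
Variables (pi_worst pi_best : {perm 'I_n}).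
Hypotheses (hn : (2 <= n)%N) (hd : (0 < d)%N).
Hypothesis hpos : forall j, (1 <= j <= d * n)%N -> 0 < s j.
Hypothesis hmono : forall i j, (1 <= i <= j)%N -> (j <= d * n)%N -> s j <= s i.
Local Notation k := (fun _ : 'I_n => d).
Local Notation U pi a := (utility s (permute_profile Q pi) k a).

Hypothesis utility_worst : forall a, U pi_worst a = blk s d a.
Hypothesis utility_best : forall a, U pi_best a = blk s d (swapped_block a).

Let n_gt0 : (0 < n)%N := ltnW hn.
Let agent0 : 'I_n := Ordinal n_gt0.

Let blk_pos a : (a < n)%N -> 0 < blk s d a.
Proof. exact: blk_gt0 hpos a hd. Qed.

Let blk_ge0 a : (a < n)%N -> 0 <= blk s d a.
Proof. by move/blk_pos/ltW. Qed.

Let utility_range pi (a : 'I_n) : blk s d a <= U pi a <= blk s d 0.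
Proof. exact: utility_bounds. Qed.

Let utility_gt0 pi (a : 'I_n) : 0 < U pi a.
Proof. by case/andP: (utility_range pi a) => + _; apply: lt_le_trans; apply: blk_pos. Qed.

Lemma price_utilitarian :
  ((n - 1)%:R * blk s d 0 + blk s d 1) / \sum_(a < n) blk s d a
  <= price_AtoP (SWu s) Q k <= n%:R * blk s d 0 / \sum_(a < n) blk s d a.
Proof.
apply: (ratio_bounds (p1 := pi_worst) (p2 := pi_best)).
- by rewrite (bigD1 agent0) ?ltr_wpDr ?blk_pos //; apply: sumr_ge0 => a _; apply/ltW/blk_pos.
- have -> : n%:R * blk s d 0 = \sum_(a < n) blk s d 0.
    by rewrite sumr_const card_ord mulr_natl.
  move=> pi; rewrite /SWu.
  by apply/andP; split; apply: ler_sum => a _; case/andP: (utility_range pi a).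
- by rewrite /SWu (eq_bigr _ (fun a _ => utility_best a)) sum_swapped // lexx.
- by rewrite /SWu (eq_bigr _ (fun a _ => utility_worst a)) lexx.
- by rewrite addr_ge0 ?mulr_ge0 ?ler0n ?blk_ge0.
Qed.

Lemma price_egalitarian :
  blk s d 1 / blk s d (n - 1) <= price_AtoP (SWe s) Q k <= blk s d 0 / blk s d (n - 1).
Proof.
have n_ord : (n - 1 < n)%N by lia.
have mem_utils pi a : U pi a \in [seq U pi b | b <- enum 'I_n] by rewrite map_f ?mem_enum.
have utils_ne pi : [seq U pi b | b <- enum 'I_n] != [::].
  by apply/eqP => e; have := mem_utils pi (Ordinal n_ord); rewrite e.
apply: (ratio_bounds (p1 := pi_worst) (p2 := pi_best)); rewrite ?blk_pos //.
- move=> pi; rewrite /SWe; apply/andP; split.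
    apply: seqmin_ge => // x /mapP [a _ ->].
    case/andP: (utility_range pi a) => lo _; apply: le_trans lo.
    by apply: (blk_antitone hmono) => //; have := ltn_ord a; lia.
  by apply: le_trans (seqmin_le (mem_utils pi agent0)) _; case/andP: (utility_range pi agent0).
- apply: seqmin_ge => // x /mapP [a _ ->]; rewrite utility_best.
  by apply: (blk_antitone hmono) => //; rewrite /swapped_block; case: ifP.
- apply: le_trans (seqmin_le (mem_utils _ (Ordinal n_ord))) _.
  by rewrite utility_worst.
- by rewrite blk_ge0.
Qed.

Lemma price_nash :
  blk s d 0 ^+ (n - 1) * blk s d 1 / \prod_(a < n) blk s d a
  <= price_AtoP (SWn s) Q k <= blk s d 0 ^+ n / \prod_(a < n) blk s d a.
Proof.
apply: (ratio_bounds (p1 := pi_worst) (p2 := pi_best)).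
- by apply: prodr_gt0 => a _; apply: blk_pos.
- have -> : blk s d 0 ^+ n = \prod_(a < n) blk s d 0 by rewrite prodr_const card_ord.
  move=> pi; rewrite /SWn.
  apply/andP; split; apply: ler_prod => a _; case/andP: (utility_range pi a) => lo hi.
    by rewrite lo blk_ge0.
  by rewrite hi ltW ?utility_gt0.
- by rewrite /SWn (eq_bigr _ (fun a _ => utility_best a)) prod_swapped // lexx.
- by rewrite /SWn (eq_bigr _ (fun a _ => utility_worst a)) lexx.
- by rewrite mulr_ge0 ?exprn_ge0 ?blk_ge0.
Qed.

End Prices.

Theorem proposition3 (R : realFieldType) (n m d : nat) (s : nat -> R)
  (hn : (2 <= n)%N) (hd : (0 < d)%N) (hm : m = (d * n)%N)
  (hpos : forall j, (1 <= j <= m)%N -> 0 < s j)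
  (hmono : forall i j, (1 <= i <= j)%N -> (j <= m)%N -> s j <= s i) :
  exists P : profile n m,
    let k : 'I_n -> nat := fun _ => d in
    let S1 := \sum_(1 <= j < d.+1) s j in
    let S2 := \sum_(d.+1 <= j < (2 * d).+1) s j in
    let Stot := \sum_(1 <= j < m.+1) s j in
    let Slast := \sum_(((n - 1) * d).+1 <= j < m.+1) s j in
    let Pblocks := \prod_(1 <= i < n.+1) \sum_(((i - 1) * d).+1 <= j < (i * d).+1) s j in
    [/\ ((n - 1)%:R * S1 + S2) / Stot <= price_AtoP (SWu s) P k <= n%:R * S1 / Stot,
        S2 / Slast <= price_AtoP (SWe s) P k <= S1 / Slast
      & S1 ^+ (n - 1) * S2 / Pblocks <= price_AtoP (SWn s) P k <= S1 ^+ n / Pblocks].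
Proof.
subst m; exists (extremal_profile (n := n) hd) => k S1 S2 Stot Slast Pblocks.
have -> : S1 = blk s d 0 by rewrite -sum_blk mul0n.
have -> : S2 = blk s d 1 by rewrite /S2 -sum_blk mul1n mul2n addnn.
have -> : Slast = blk s d (n - 1).
  by rewrite /Slast -sum_blk (_ : (n - 1) * d + d = d * n)%N //; nia.
have -> : Stot = \sum_(a < n) blk s d a by rewrite /Stot -sum_blocks mulnC.
have -> : Pblocks = \prod_(a < n) blk s d a by apply: prod_blocks.
have worst := utility_extremal_id (n := n) hd s.
have best := utility_extremal_swapped hd hn s.
split; [exact: price_utilitarian worst best | exact: price_egalitarian worst best
       | exact: price_nash worst best].
Qed.
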